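(* Write $v(m,n)=v^{11}(m,n)$. For every $m\in\mathbb Z_{>0}$ and $\nu\in\mathbb Z_{\ge 0}$, in $M_r$ we have $$v(m,m)\,v(-m,-m)^{\nu}\mathbf 1=2m^2\nu(r+2\nu-2)\,v(-m,-m)^{\nu-1}\mathbf 1$$ (for $\nu=0$ both sides are $0$).
   Context: Fix an integer $d\ge 2$ and $r\in\mathbb{C}$. Let $\hat{\mathfrak h}$ be the complex Lie algebra with basis $\{v^i(m)\mid 1\le i\le d,\ m\in\mathbb{Z}\}\cup\{\mathbf c\}$ and bracket $[v^i(m),v^j(n)]=\delta_{m+n,0}\delta_{i,j}\,m\,\mathbf c$, $[\mathbf c,\hat{\mathfrak h}]=0$. In $A=U(\hat{\mathfrak h})/\langle \mathbf c-1\rangle$ let $v^{ij}(m,n)$ be the image of $v^i(m)v^j(n)$; then $v^{ij}(m,n)=v^{ji}(n,m)$ unless $i=j$ and $m=-n$, and $v^{ii}(m,-m)=v^{ii}(-m,m)+m$. Let $\mathcal B=\{v^{ii}(m,n)\mid 1\le i\le d,\ m\le n\}\cup\{v^{ij}(m,n)\mid 1\le i<j\le d,\ m,n\in\mathbb Z\}$; then $\mathcal B\cup\{1\}$ is linearly independent, $\mathcal L:=\mathrm{span}_{\mathbb C}\mathcal B\oplus\mathbb C\subset A$ contains every $v^{ij}(m,n)$ and is closed under $[x,y]=xy-yx$. With $\pi_1,\pi_2$ the projections of $\mathcal L$ onto $\mathrm{span}\,\mathcal B$ and onto $\mathbb C$, $[x,y]_r=\pi_1([x,y])+r\pi_2([x,y])$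 is a Lie bracket on $\mathcal L$; call this Lie algebra $\mathcal L_r$. Let $\mathcal B_+=\{v^{ij}(m,n)\in\mathcal B\mid m\ge 0\text{ or }n\ge 0\}$, $\mathcal L_r^+=\mathrm{span}\,\mathcal B_+\oplus\mathbb C$, and $M_r=U(\mathcal L_r)\otimes_{U(\mathcal L_r^+)}\mathbb C\mathbf 1$, where $\mathcal B_+$ acts by $0$ on $\mathbf 1$ and $s\in\mathbb C\subset\mathcal L_r$ acts by the scalar $s$. *)

From HB Require Import structures.
From mathcomp Require Import all_boot all_order all_algebra.
From mathcomp Require Import reals complex.
Set Implicit Arguments. Unset Strict Implicit. Unset Printing Implicit Defensive.
Import Order.TTheory GRing.Theory Num.Theory.
Local Open Scope ring_scope.

(* Generators of the vector space L:  Some (i,j,m,n) stands for v^{ij}(m,n)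
   (indices i,j are 0-based: 'I_d = {0,...,d-1} encodes {1,...,d}),
   None stands for the element 1 of the summand C of L. *)
Definition gen (d : nat) := option ('I_d * 'I_d * int * int).
Definition word (d : nat) := seq (gen d).

Section FreeAlg.
Variable F : fieldType.
Variable d : nat.

(* Elements of the free associative algebra F<gen d> are represented by their
   coefficient functions  word d -> F  (all elements we build have finite
   support). *)
Definition elem := word d -> F.

Definition el0 : elem := fun _ => 0.
Definition eladd (f g : elem) : elem := fun w => f w + g w.
Definition elscale (c : F) (f : elem) : elem := fun w => c * f w.
Definition single (u : word d) : elem := fun w => (w == u)%:R.
Definition lmulw (u : word d) (f : elem) : elem :=
  fun w => if take (size u) w == u then f (drop (size u) w) else 0.
Definition rmulw (v : word d) (f : elem) : elem :=
  fun w => if drop (size w - size v) w == v then f (take (size w - size v) w)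
           else 0.

(* [v^p(s), v^q(t)] = delta_{pq} delta_{s+t,0} s *)
Definition hcomm (p : 'I_d) (s : int) (q : 'I_d) (t : int) : F :=
  if (p == q) && (s + t == 0) then s%:~R else 0.

(* scalar (C-)component of v^{pq}(s,t) in the decomposition L = span B (+) C *)
Definition corr (p q : 'I_d) (s t : int) : F :=
  if (p == q) && (s + t == 0) && (0 < s) then s%:~R else 0.

(* image in L_r of the element v^{pq}(s,t) of A occurring in a commutator:
   basis part + r * scalar part, written with generators
   (v^{pq}(s,t) = basis part + corr * 1 in L). *)
Definition brterm (r : F) (p q : 'I_d) (s t : int) : elem :=
  eladd (single [:: Some (p, q, s, t)])
        (elscale ((r - 1) * corr p q s t) (single [:: None])).

Definition bracket_r (r : F) (x y : gen d) : elem :=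
  match x, y with
  | Some (i, j, a, b), Some (k, l, c, e) =>
      eladd (elscale (hcomm j b k c) (brterm r i l a e))
     (eladd (elscale (hcomm j b l e) (brterm r i k a c))
     (eladd (elscale (hcomm i a k c) (brterm r l j e b))
            (elscale (hcomm i a l e) (brterm r k j c b))))
  | _, _ => el0
  end.

(* two-sided relators: linear relations presenting L, and the Lie relations
   x y - y x - [x,y]_r defining U(L_r) *)
Inductive tworel (r : F) : elem -> Prop :=
  | rel_sym (i j : 'I_d) (a b : int) :
      ~~ ((i == j) && (a + b == 0)) ->
      tworel r (eladd (single [:: Some (i, j, a, b)])
                      (elscale (-1) (single [:: Some (j, i, b, a)])))
  | rel_diag (i : 'I_d) (a : int) :
      tworel r (eladd (single [:: Some (i, i, a, - a)])
               (eladd (elscale (-1) (single [:: Some (i, i, - a, a)]))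
                      (elscale (- a%:~R) (single [:: None]))))
  | rel_lie (x y : gen d) :
      tworel r (eladd (single [:: x; y])
               (eladd (elscale (-1) (single [:: y; x]))
                      (elscale (-1) (bracket_r r x y)))).

Definition inB (t : 'I_d * 'I_d * int * int) : bool :=
  let: (i, j, m, n) := t in ((i : nat) < j)%N || ((i == j) && (m <= n)).
Definition inBplus (t : 'I_d * 'I_d * int * int) : bool :=
  let: (i, j, m, n) := t in inB t && ((0 <= m) || (0 <= n)).

(* left relators: x - chi(x) for x in L_r^+ (B_+ acts by 0, s in C by s) *)
Inductive leftrel : elem -> Prop :=
  | lrel_plus t : inBplus t -> leftrel (single [:: Some t])
  | lrel_one : leftrel (eladd (single [:: None]) (elscale (-1) (single [::]))).

(* the kernel of  F<gen d> -> M_r = U(L_r) (x)_{U(L_r^+)} C 1 :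
   two-sided ideal generated by tworel plus left ideal generated by leftrel *)
Inductive inKer (r : F) : elem -> Prop :=
  | ker0 : inKer r el0
  | ker_lin c f g : inKer r f -> inKer r g -> inKer r (eladd (elscale c f) g)
  | ker_ext f g : inKer r f -> (forall w, f w = g w) -> inKer r g
  | ker_two u v rho : tworel r rho -> inKer r (lmulw u (rmulw v rho))
  | ker_left u k : leftrel k -> inKer r (lmulw u k).

(* equality in M_r of  (word u) . 1  and  c * (word v) . 1 *)
Definition Mr_eq (r : F) (u : word d) (c : F) (v : word d) : Prop :=
  inKer r (eladd (single u) (elscale (- c) (single v))).

End FreeAlg.

(* the index 1 (0-based: 0) of 'I_d when d >= 2 *)
Definition idx1 (d : nat) (hd : (1 < d)%N) : 'I_d := Ordinal (ltnW hd).

From HB Require Import structures.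
From mathcomp Require Import all_boot all_order all_algebra.
From mathcomp Require Import reals complex.
From mathcomp Require Import ring zify.
Import Order.TTheory GRing.Theory Num.Theory.
Local Open Scope ring_scope.

(* Write x = v(m,m), y = v(-m,-m), h = v(-m,m) and k = v(m,-m).  In L_r one has
   [x, y]_r = 2m (h + k) + 2m^2 (r - 1), k = h + m and [h, y]_r = 2m y, while
   x and h lie in B_+ and so kill 1.  Hence h y^n 1 = 2mn y^n 1, and commuting x
   past one factor y shows that the scalar c_n with x y^n 1 = c_n y^(n-1) 1
   satisfies c_(n+1) = c_n + 2m^2 (r + 4n), c_0 = 0, i.e.
   c_n = 2m^2 n (r + 2n - 2). *)

Set Implicit Arguments.

Section WordMultiplication.
Variables (F : fieldType) (d : nat).
Implicit Types (u w s z : word d) (f g : elem F d).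

Lemma eladdE f g z : eladd f g z = f z + g z. Proof. by []. Qed.
Lemma elscaleE c f z : elscale c f z = c * f z. Proof. by []. Qed.
Lemma el0E z : @el0 F d z = 0. Proof. by []. Qed.

Lemma lmulw_single u s z : lmulw u (single F s) z = single F (u ++ s) z.
Proof.
rewrite /lmulw /single; case: ifP => [/eqP Hu | Hn].
  by rewrite -{2}(cat_take_drop (size u) z) Hu eqseq_cat // eqxx.
case: eqP => // Hz; move: Hn; by rewrite Hz take_size_cat ?eqxx.
Qed.

Lemma rmulw_single w s z : rmulw w (single F s) z = single F (s ++ w) z.
Proof.
rewrite /rmulw /single; case: ifP => [/eqP Hw | Hn].
  have Ez : z = take (size z - size w) z ++ w.
    by rewrite -[LHS](cat_take_drop (size z - size w)) Hw.
  rewrite [X in X == _ ++ _]Ez.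
  case: eqP => [->|ne]; first by rewrite eqxx.
  case: eqP => // Hs; exfalso; apply: ne.
  have : size (take (size z - size w) z) = size s.
    by move: (congr1 size Hs); rewrite !size_cat => /addIn.
  by move/eqP: Hs => /[swap] /eqseq_cat -> /andP [/eqP].
case: eqP => // Hz; move: Hn; by rewrite Hz size_cat addnK drop_size_cat ?eqxx.
Qed.

Lemma eq_lmulw u f g z : f =1 g -> lmulw u f z = lmulw u g z.
Proof. by move=> fg; rewrite /lmulw fg. Qed.

Lemma lmulwD u f g z : lmulw u (eladd f g) z = lmulw u f z + lmulw u g z.
Proof. by rewrite /lmulw /eladd; case: ifP; rewrite ?addr0. Qed.

Lemma lmulwZ u c f z : lmulw u (elscale c f) z = c * lmulw u f z.
Proof. by rewrite /lmulw /elscale; case: ifP; rewrite ?mulr0. Qed.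

Lemma rmulwD w f g z : rmulw w (eladd f g) z = rmulw w f z + rmulw w g z.
Proof. by rewrite /rmulw /eladd; case: ifP; rewrite ?addr0. Qed.

Lemma rmulwZ w c f z : rmulw w (elscale c f) z = c * rmulw w f z.
Proof. by rewrite /rmulw /elscale; case: ifP; rewrite ?mulr0. Qed.

Lemma lrmulwD u w f g z :
  lmulw u (rmulw w (eladd f g)) z = lmulw u (rmulw w f) z + lmulw u (rmulw w g) z.
Proof. by rewrite -lmulwD; apply: eq_lmulw => s; rewrite rmulwD. Qed.

Lemma lrmulwZ u w c f z :
  lmulw u (rmulw w (elscale c f)) z = c * lmulw u (rmulw w f) z.
Proof. by rewrite -lmulwZ; apply: eq_lmulw => s; rewrite rmulwZ. Qed.

Lemma lrmulw_single u w s z :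
  lmulw u (rmulw w (single F s)) z = single F (u ++ s ++ w) z.
Proof. by rewrite -lmulw_single; apply: eq_lmulw => t; rewrite rmulw_single. Qed.

Lemma lrmulw0 u w z : lmulw u (rmulw w (@el0 F d)) z = 0.
Proof. by rewrite /lmulw /rmulw /el0; case: ifP => //; case: ifP. Qed.

End WordMultiplication.

(* Otherwise [rewrite] and [ring] compare coefficient functions by unfolding them,
   which is prohibitively slow. *)
Opaque single eladd elscale el0 lmulw rmulw.

Lemma hcomm_opp (F : fieldType) d (p : 'I_d) (s : int) :
  hcomm F p s p (- s) = s%:~R.
Proof. by rewrite /hcomm eqxx addrN eqxx. Qed.

Lemma hcomm_nonzero_sum (F : fieldType) d (p q : 'I_d) (s t : int) :
  s + t != 0 -> hcomm F p s q t = 0.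
Proof. by move=> /negbTE st; rewrite /hcomm st andbF. Qed.

Lemma corr_opp (F : fieldType) d (p : 'I_d) (s : int) :
  0 < s -> corr F p p s (- s) = s%:~R.
Proof. by move=> s_gt0; rewrite /corr eqxx addrN eqxx s_gt0. Qed.

Lemma corr_nonpos (F : fieldType) d (p q : 'I_d) (s t : int) :
  s <= 0 -> corr F p q s t = 0.
Proof. by move=> s_le0; rewrite /corr ltNge s_le0 andbF. Qed.

Lemma corr_nonzero_sum (F : fieldType) d (p q : 'I_d) (s t : int) :
  s + t != 0 -> corr F p q s t = 0.
Proof. by move=> /negbTE st; rewrite /corr st andbF. Qed.

Lemma diag_in_Bplus d (i : 'I_d) (s t : int) : s <= t -> 0 <= t -> inBplus (i, i, s, t).
Proof. by move=> st t_ge0; rewrite /inBplus /inB eqxx st t_ge0 /= !orbT. Qed.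

Section InducedModule.
Variables (F : fieldType) (d : nat) (r : F).
Implicit Types (u w : word d) (f g : elem F d).

Definition eqM f g := inKer r (fun z => f z - g z).

Lemma eqM_ext f g f' g' : eqM f g -> f' =1 f -> g =1 g' -> eqM f' g'.
Proof. by move=> fg ff' gg'; apply: ker_ext fg _ => z; rewrite ff' gg'. Qed.

Lemma eqM_refl f : eqM f f.
Proof. by apply: ker_ext (@ker0 F d r) _ => z; rewrite el0E subrr. Qed.

Lemma eqM_trans f g h : eqM f g -> eqM g h -> eqM f h.
Proof.
by move=> fg gh; apply: ker_ext (ker_lin 1 fg gh) _ => z; rewrite !eladdE !elscaleE; ring.
Qed.

Lemma eqMD f1 g1 f2 g2 : eqM f1 g1 -> eqM f2 g2 ->
  eqM (fun z => f1 z + f2 z) (fun z => g1 z + g2 z).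
Proof.
by move=> e1 e2; apply: ker_ext (ker_lin 1 e1 e2) _ => z; rewrite !eladdE !elscaleE; ring.
Qed.

Lemma eqMZ c f g : eqM f g -> eqM (fun z => c * f z) (fun z => c * g z).
Proof.
move=> fg; apply: ker_ext (ker_lin c fg (@ker0 F d r)) _ => z.
by rewrite eladdE elscaleE el0E; ring.
Qed.

Lemma eqM_commute u w a b :
  eqM (single F (u ++ a :: b :: w))
      (fun z => single F (u ++ b :: a :: w) z + lmulw u (rmulw w (bracket_r r a b)) z).
Proof.
apply: ker_ext (ker_two u w (rel_lie r a b)) _ => z.
rewrite !lrmulwD !lrmulwZ !lrmulw_single !cat_cons ?cat0s; ring.
Qed.

Lemma eqM_Bplus u t : inBplus t -> eqM (single F (u ++ [:: Some t])) (fun _ => 0).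
Proof.
move=> Bt; apply: ker_ext (ker_left r u (lrel_plus F Bt)) _ => z.
by rewrite lmulw_single subr0.
Qed.

(* The scalar 1 of L_r is central, so it can be removed from any position. *)
Lemma eqM_drop_one u w : eqM (single F (u ++ None :: w)) (single F (u ++ w)).
Proof.
elim: w u => [|g w IHw] u.
  apply: ker_ext (ker_left r u (lrel_one F d)) _ => z.
  by rewrite lmulwD lmulwZ !lmulw_single cats0; ring.
apply: eqM_trans (eqM_commute u w None g) _.
apply: eqM_ext (IHw (rcons u g)) _ _ => z; last by rewrite cat_rcons.
by rewrite lrmulw0 addr0 cat_rcons.
Qed.

Lemma eqM_diag_swap u w i (a : int) :
  eqM (single F (u ++ Some (i, i, a, - a) :: w))
      (fun z => single F (u ++ Some (i, i, - a, a) :: w) z + a%:~R * single F (u ++ w) z).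
Proof.
have swap : eqM (single F (u ++ Some (i, i, a, - a) :: w))
  (fun z => single F (u ++ Some (i, i, - a, a) :: w) z + a%:~R * single F (u ++ None :: w) z).
  apply: ker_ext (ker_two u w (rel_diag r i a)) _ => z; rewrite !lrmulwD !lrmulwZ.
  by repeat erewrite lrmulw_single; rewrite !cat_cons ?cat0s; ring.
exact: eqM_trans swap (eqMD (eqM_refl _) (eqMZ _ (eqM_drop_one u w))).
Qed.

Section ActionOnPowers.
Variables (i : 'I_d) (m : int).
Hypothesis m_gt0 : 0 < m.

Let x : gen d := Some (i, i, m, m).
Let y : gen d := Some (i, i, - m, - m).
Let h : gen d := Some (i, i, - m, m).
Let k : gen d := Some (i, i, m, - m).
Let Y n := nseq n y.

Lemma lrmulw_bracket_hy u w z :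
  lmulw u (rmulw w (bracket_r r h y)) z = 2 * m%:~R * single F (u ++ y :: w) z.
Proof.
have hcomm_yy : hcomm F i (- m) i (- m) = 0 by apply: hcomm_nonzero_sum; lia.
have corr_yy : corr F i i (- m) (- m) = 0 by apply: corr_nonzero_sum; lia.
rewrite /bracket_r /= !lrmulwD !lrmulwZ /brterm !lrmulwD !lrmulwZ.
repeat erewrite lrmulw_single.
by rewrite hcomm_opp hcomm_yy corr_yy /=; ring.
Qed.

Lemma lrmulw_bracket_xy u w z : lmulw u (rmulw w (bracket_r r x y)) z =
  2 * m%:~R * single F (u ++ k :: w) z + 2 * m%:~R * single F (u ++ h :: w) z
  + 2 * m%:~R ^+ 2 * (r - 1) * single F (u ++ None :: w) z.
Proof.
have corr_hk : corr F i i (- m) m = 0 by apply: corr_nonpos; lia.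
rewrite /bracket_r /= !lrmulwD !lrmulwZ /brterm !lrmulwD !lrmulwZ.
repeat erewrite lrmulw_single.
by rewrite hcomm_opp corr_opp // corr_hk /=; ring.
Qed.

Lemma eqM_h_powers n u :
  eqM (single F (u ++ h :: Y n)) (fun z => 2 * m%:~R * n%:R * single F (u ++ Y n) z).
Proof.
elim: n u => [|n IHn] u.
  have h_plus : inBplus (i, i, - m, m) by apply: diag_in_Bplus; lia.
  by apply: eqM_ext (eqM_Bplus u _ h_plus) _ _ => // z; ring.
apply: eqM_trans (eqM_commute u (Y n) h y) _.
have bracket_act := eqM_refl (fun z => 2 * m%:~R * single F (u ++ y :: Y n) z).
apply: eqM_ext (eqMD (IHn (rcons u y)) bracket_act) _ _ => z.
  by rewrite cat_rcons lrmulw_bracket_hy.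
by rewrite cat_rcons /=; ring.
Qed.

Lemma eqM_x_powers n u : eqM (single F (u ++ x :: Y n))
  (fun z => 2 * m%:~R ^+ 2 * n%:R * (r + 2 * n%:R - 2) * single F (u ++ Y n.-1) z).
Proof.
elim: n u => [|n IHn] u.
  have x_plus : inBplus (i, i, m, m) by apply: diag_in_Bplus; lia.
  by apply: eqM_ext (eqM_Bplus u _ x_plus) _ _ => // z; ring.
apply: eqM_trans (eqM_commute u (Y n) x y) _.
have k_act : eqM (single F (u ++ k :: Y n))
    (fun z => (2 * m%:~R * n%:R + m%:~R) * single F (u ++ Y n) z).
  apply: eqM_trans (eqM_diag_swap u (Y n) i m) _.
  by apply: eqM_ext (eqMD (eqM_h_powers n u) (eqM_refl _)) _ _ => // z; ring.
have bracket_act := eqMD (eqMZ (2 * m%:~R) k_act)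
  (eqMD (eqMZ (2 * m%:~R) (eqM_h_powers n u))
        (eqMZ (2 * m%:~R ^+ 2 * (r - 1)) (eqM_drop_one u (Y n)))).
apply: eqM_ext (eqMD (IHn (rcons u y)) bracket_act) _ _ => z.
  by rewrite cat_rcons lrmulw_bracket_xy; ring.
by rewrite cat_rcons; case: n {IHn k_act bracket_act} => [|n] /=; ring.
Qed.

End ActionOnPowers.

End InducedModule.

Theorem lemma5p3 (R : realType) (d : nat) (hd : (1 < d)%N) (r : R[i])
    (m : int) (nu : nat) (hm : 0 < m) :
  let v := fun a b : int => Some (idx1 hd, idx1 hd, a, b) : gen d in
  Mr_eq r (v m m :: nseq nu (v (- m) (- m)))
          (2 * m%:~R ^+ 2 * nu%:R * (r + 2 * nu%:R - 2))
          (nseq nu.-1 (v (- m) (- m))).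
Proof.
move=> v.
apply: ker_ext (@eqM_x_powers _ _ r (idx1 hd) m hm nu [::]) _ => z.
by rewrite !eladdE !elscaleE /=; ring.
Qed.
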